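(* Let $d$ be a prime and $(p_{nm})_{n,m\in\mathbb{Z}_d}$ a probability distribution on $\mathbb{Z}_d\times\mathbb{Z}_d$. Consider the $d+1$ lines through the origin $\{(0,k):k\in\mathbb{Z}_d\}$ and $\{(k,ak):k\in\mathbb{Z}_d\}$ for $a\in\mathbb{Z}_d$, and let $L_1,\dots,L_{d+1}$ be the sums of $p_{nm}$ over these lines. If $p_{00}>1/d$, then $L_{\max}:=\max\{L_1,\dots,L_{d+1}\}>\frac{2}{d+1}$.
   Context: The $p_{nm}$ are Bell-diagonal probabilities of a two-qudit state; the $d+1$ lines correspond to the $d+1$ mutually unbiased bases, and $L_i$ is the weight associated with the $i$-th one. *)

From HB Require Import structures.
From mathcomp Require Import all_boot all_order all_algebra.
Set Implicit Arguments. Unset Strict Implicit. Unset Printing Implicit Defensive.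
Import Order.TTheory GRing.Theory Num.Theory.
Local Open Scope ring_scope.

(* Lines through the origin of Z_d x Z_d: [None] is the vertical line
   {(0,k) : k}, [Some a] is the line {(k, a k) : k}. *)
Definition line_weight (R : realFieldType) (d : nat)
    (p : 'Z_d -> 'Z_d -> R) (l : option 'Z_d) : R :=
  match l with
  | None => \sum_(k : 'Z_d) p 0 k
  | Some a => \sum_(k : 'Z_d) p k (a * k)
  end.

(* L_max = max over the d+1 lines (the index set is nonempty and all
   weights are nonnegative for a probability distribution). *)
Definition Lmax (R : realFieldType) (d : nat) (p : 'Z_d -> 'Z_d -> R) : R :=
  \big[Num.max/0]_(l : option 'Z_d) line_weight p l.

From mathcomp Require Import all_boot all_order all_algebra.
Import Order.TTheory GRing.Theory Num.Theory.
Local Open Scope ring_scope.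

(* Every point of Z_d x Z_d other than the origin lies on exactly one line
   through the origin, while the origin lies on all d+1 of them.  Hence the
   d+1 line weights add up to 1 + d p_00 > 2, and their maximum exceeds their
   average 2/(d+1). *)

Lemma unitZp_prime [d : nat] [k : 'Z_d] : prime d -> k != 0 -> k \is a GRing.unit.
Proof.
move=> d_prime k_neq0; have d_gt1 := prime_gt1 d_prime.
have k_lt_d : (k < d)%N by rewrite -[X in (_ < X)%N](Zp_cast d_gt1).
have k_gt0 : (0 < k)%N by rewrite lt0n.
by rewrite -[k]natr_Zp unitZpE // prime_coprime // gtnNdvd.
Qed.

Lemma card_Zp_gt1 (d : nat) : (1 < d)%N -> #|'Z_d| = d.
Proof. by move=> d_gt1; rewrite card_ord Zp_cast. Qed.

Lemma sum_line_weight [R : realFieldType] [d : nat] (p : 'Z_d -> 'Z_d -> R) :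
  prime d ->
  \sum_(l : option 'Z_d) line_weight p l
    = \sum_(n : 'Z_d) \sum_(m : 'Z_d) p n m + d%:R * p 0 0.
Proof.
move=> d_prime; have d_gt1 := prime_gt1 d_prime.
rewrite (bigD1 None) //= (reindex_onto Some (odflt 0)); last by case.
rewrite [X in _ + X](eq_bigl xpredT) => [|a]; last by rewrite /= eqxx.
under [X in _ + X]eq_bigr do rewrite /= (bigD1 0) //= mulr0.
rewrite big_split /= sumr_const card_Zp_gt1 // exchange_big /=.
have row_sum (k : 'Z_d) : k != 0 -> \sum_(a : 'Z_d) p k (a * k) = \sum_m p k m.
  by move=> k_neq0; rewrite [RHS](reindex_inj (mulIr (unitZp_prime d_prime k_neq0))).
rewrite (eq_bigr _ row_sum) [in RHS](bigD1 0) //= mulr_natl.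
by rewrite addrA addrAC.
Qed.

Lemma sum_line_weight_le_Lmax [R : realFieldType] [d : nat]
    (p : 'Z_d -> 'Z_d -> R) :
  (1 < d)%N -> \sum_(l : option 'Z_d) line_weight p l <= (d%:R + 1) * Lmax p.
Proof.
move=> d_gt1; apply: le_trans (_ : \sum_(l : option 'Z_d) Lmax p <= _).
  by apply: ler_sum => l _; apply: le_bigmax.
by rewrite sumr_const card_option card_Zp_gt1 // mulrSr mulrDl mul1r mulr_natl.
Qed.

Theorem lemma5 (R : realFieldType) (d : nat) (p : 'Z_d -> 'Z_d -> R) :
  prime d ->
  (forall n m, 0 <= p n m) ->
  \sum_(n : 'Z_d) \sum_(m : 'Z_d) p n m = 1 ->
  p 0 0 > 1 / d%:R ->
  Lmax p > 2 / (d%:R + 1).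
Proof.
move=> d_prime _ total p00_gt.
have d_gt1 := prime_gt1 d_prime.
have d_gt0 : 0 < d%:R :> R by rewrite ltr0n ltnW.
have weights_gt2 : 2 < \sum_(l : option 'Z_d) line_weight p l.
  rewrite sum_line_weight // total [2]/(1 + 1) ltrD2l mulrC -ltr_pdivrMr //.
have := lt_le_trans weights_gt2 (sum_line_weight_le_Lmax p d_gt1).
by rewrite ltr_pdivrMr ?ltr_wpDr // mulrC.
Qed.
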